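(* Let $n\in\mathbb{N}$ and let $a_1,\ldots,a_n\ge0$ satisfy $\sum_{j=1}^n a_j=n$. Let $$\mathcal{E}=\Big\{x=(x_1,\ldots,x_n)^t\in\mathbb{R}^n\;\Big|\;\sum_{j=1}^n a_jx_j^2=1\Big\}.$$ Then there is an orthonormal basis $v_1,\ldots,v_n$ of $\mathbb{R}^n$ with $v_j\in\mathcal{E}$ for all $j$. *)

From mathcomp Require Import all_boot all_order all_algebra.
From mathcomp Require Import reals.
Set Implicit Arguments. Unset Strict Implicit. Unset Printing Implicit Defensive.
Import Order.TTheory GRing.Theory Num.Theory.
Local Open Scope ring_scope.

(* R^n vectors are row vectors 'rV[R]_n; coordinate j is x 0 j. *)

Definition dotv (R : realType) (n : nat) (x y : 'rV[R]_n) : R :=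
  \sum_(j < n) x 0 j * y 0 j.

Definition ellipsoid (R : realType) (n : nat) (a : 'I_n -> R) (x : 'rV[R]_n) : Prop :=
  \sum_(j < n) a j * x 0 j ^+ 2 = 1.

(* v : 'I_n -> 'rV_n is an orthonormal basis of R^n: pairwise orthonormal n
   vectors (hence linearly independent, hence spanning) and, explicitly, a
   basis (the matrix with rows v j is invertible). *)
Definition orthonormal_basis (R : realType) (n : nat) (v : 'I_n -> 'rV[R]_n) : Prop :=
  (forall i j, dotv (v i) (v j) = (i == j)%:R) /\
  (\matrix_(i < n) v i) \in unitmx.

From mathcomp Require Import all_boot all_order all_algebra.
From mathcomp Require Import reals ring lra.
Set Implicit Arguments. Unset Strict Implicit. Unset Printing Implicit Defensive.
Import Order.TTheory GRing.Theory Num.Theory.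
Local Open Scope ring_scope.

(* Let q(x) = sum_j a_j x_j^2.  On the standard basis q is diagonal with
   diagonal entries a_1, ..., a_n of average 1.  Pick p with q(p) <= 1 and
   q with q(q) >= 1 and rotate the plane they span by an angle such that the
   new vector w = c p + s q has q(w) = c^2 q(p) + s^2 q(q) = 1.  The other new
   vector w' = -s p + c q has q(w') = q(p) + q(q) - 1, so the family obtained
   by replacing p, q with w' is still orthonormal, q-orthogonal and of average
   1; it is one vector shorter and orthogonal to w, so induction finishes. *)

Lemma pairwise_perm (T : eqType) (r : rel T) (s1 s2 : seq T) :
  symmetric r -> perm_eq s1 s2 -> pairwise r s1 = pairwise r s2.
Proof.
move=> rC; elim: s1 s2 => [|x s1 IH] s2 eq12.
  by case: s2 eq12 => // y s2 /perm_size.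
have : x \in s2 by rewrite -(perm_mem eq12) mem_head.
move: eq12 => /[swap] /splitPr [s2a s2b] eq12.
have eq12' : perm_eq s1 (s2a ++ s2b).
  by rewrite -(perm_cons x) (permPl eq12) -cat1s perm_catCA.
rewrite pairwise_cons (IH _ eq12') (perm_all _ eq12') !pairwise_cat pairwise_cons.
rewrite all_cat allrel_consr (eq_all (rC x)) -!andbA; congr andb.
by rewrite andbCA; congr andb; rewrite andbCA.
Qed.

Section MeanValue.
Variables (R : realDomainType) (T : eqType).
Implicit Types (f : T -> R) (s : seq T) (c : R).

Lemma exists_le_mean f s c : s != [::] ->
  \sum_(u <- s) f u <= (size s)%:R * c -> exists2 u, u \in s & f u <= c.
Proof.
move=> s_neq0 hs; apply/hasP; apply: contraTT hs => /hasPn fgt.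
rewrite -ltNge -sum1_size natr_sum mulr_suml !big_seq.
apply: ltr_sum => [|u us]; last by rewrite mul1r ltNge fgt.
by case: s s_neq0 {fgt} => // x s _; apply/hasP; exists x; rewrite mem_head.
Qed.

Lemma exists_ge_mean f s c : s != [::] ->
  (size s)%:R * c <= \sum_(u <- s) f u -> exists2 u, u \in s & c <= f u.
Proof.
move=> s_neq0 hs; have [|u us] := @exists_le_mean (fun u => - f u) s (- c) s_neq0.
  by rewrite sumrN mulrN lerN2.
by rewrite lerN2; exists u.
Qed.

Lemma exists_split_at_mean f s :
  (1 < size s)%N -> \sum_(u <- s) f u = (size s)%:R ->
  exists p q r, [/\ perm_eq s [:: p, q & r], f p <= 1 & 1 <= f q].
Proof.
move=> size_s sum_s.
have [p ps fp] : exists2 p, p \in s & f p <= 1.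
  by apply: exists_le_mean; rewrite ?mulr1 ?sum_s // -size_eq0 -lt0n ltnW.
have size_s' : size s = (size (rem p s)).+1 by rewrite size_rem // prednK // ltnW.
have sum_s' : \sum_(u <- rem p s) f u = (size s)%:R - f p.
  by rewrite -sum_s (perm_big _ (perm_to_rem ps)) big_cons addrC addKr.
have [q qs fq] : exists2 q, q \in rem p s & 1 <= f q.
  apply: exists_ge_mean; first by rewrite -size_eq0 -eqSS -size_s' eq_sym ltn_eqF.
  by rewrite sum_s' size_s' mulr1 -natr1; lra.
exists p, q, (rem q (rem p s)); split => //.
by rewrite (permPl (perm_to_rem ps)) perm_cons perm_to_rem.
Qed.

End MeanValue.

Lemma exists_sqr_weights (R : rcfType) (x y : R) : x <= 1 -> 1 <= y ->
  exists c s : R, c ^+ 2 + s ^+ 2 = 1 /\ c ^+ 2 * x + s ^+ 2 * y = 1.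
Proof.
move=> x_le1 y_ge1.
have [lt_xy | ge_xy] := ltP x y; last first.
  by exists 1, 0; rewrite expr1n expr0n /=; split; lra.
pose l := (y - 1) / (y - x).
have yx_gt0 : 0 < y - x by rewrite subr_gt0.
have l_ge0 : 0 <= l by apply: divr_ge0; lra.
have l_le1 : l <= 1 by rewrite ler_pdivrMr // mul1r; lra.
exists (Num.sqrt l), (Num.sqrt (1 - l)); rewrite !sqr_sqrtr ?subr_ge0 //.
split; first by rewrite addrC subrK.
have : l * (y - x) = y - 1 by rewrite divfK // gt_eqF.
lra.
Qed.

Definition diag_form {R : realType} {N : nat} (a : 'I_N -> R) (x y : 'rV[R]_N) : R :=
  \sum_(j < N) a j * (x 0 j * y 0 j).

Notation dot := (diag_form (fun=> 1)).

Section DiagonalForm.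
Variables (R : realType) (N : nat).
Implicit Types (a : 'I_N -> R) (x y z p q : 'rV[R]_N).

Lemma dotvE x y : dotv x y = dot x y.
Proof. by apply: eq_bigr => j _; rewrite mul1r. Qed.

Lemma diag_formC a x y : diag_form a x y = diag_form a y x.
Proof. by apply: eq_bigr => j _; rewrite [x 0 j * _]mulrC. Qed.

Lemma diag_formDl a (c d : R) x y z :
  diag_form a (c *: x + d *: y) z = c * diag_form a x z + d * diag_form a y z.
Proof.
by rewrite !mulr_sumr -big_split; apply: eq_bigr => j _; rewrite !mxE /=; ring.
Qed.

Lemma diag_formDr a (c d : R) x y z :
  diag_form a z (c *: x + d *: y) = c * diag_form a z x + d * diag_form a z y.
Proof. by rewrite diag_formC diag_formDl ![diag_form a _ z]diag_formC. Qed.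

Lemma diag_form_rot a (c s c' s' : R) p q : diag_form a p q = 0 ->
  diag_form a (c *: p + s *: q) (c' *: p + s' *: q) =
    c * c' * diag_form a p p + s * s' * diag_form a q q.
Proof.
by move=> pq0; rewrite diag_formDl !diag_formDr pq0 (diag_formC a q p) pq0; ring.
Qed.

Lemma diag_form_delta a x j : diag_form a x (delta_mx 0 j) = a j * x 0 j.
Proof.
rewrite /diag_form (bigD1 j) //= big1 ?addr0 => [|i /negbTE ij]; rewrite mxE eqxx.
  by rewrite eqxx mulr1.
by rewrite ij !mulr0.
Qed.

Lemma diag_form_sqr a x : diag_form a x x = \sum_(j < N) a j * x 0 j ^+ 2.
Proof. by apply: eq_bigr => j _; rewrite expr2. Qed.

Lemma diag_formDl_all0 a (c d : R) p q (s : seq 'rV[R]_N) :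
  all (fun u => diag_form a p u == 0) s -> all (fun u => diag_form a q u == 0) s ->
  all (fun u => diag_form a (c *: p + d *: q) u == 0) s.
Proof.
move=> /allP p_s /allP q_s; apply/allP => u us.
by rewrite diag_formDl (eqP (p_s u us)) (eqP (q_s u us)) !mulr0 addr0.
Qed.

Definition orthogonal_seq (b : 'rV[R]_N -> 'rV[R]_N -> R) (s : seq 'rV[R]_N) :=
  pairwise (fun u v => b u v == 0) s.

Definition orthonormal_seq (s : seq 'rV[R]_N) :=
  all (fun u => dot u u == 1) s && orthogonal_seq dot s.

Lemma perm_orthogonal_seq a (s1 s2 : seq 'rV[R]_N) : perm_eq s1 s2 ->
  orthogonal_seq (diag_form a) s1 = orthogonal_seq (diag_form a) s2.
Proof. by apply: pairwise_perm => u v; rewrite diag_formC. Qed.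

Lemma perm_orthonormal_seq (s1 s2 : seq 'rV[R]_N) : perm_eq s1 s2 ->
  orthonormal_seq s1 = orthonormal_seq s2.
Proof.
by move=> eq12; rewrite /orthonormal_seq (perm_all _ eq12) (perm_orthogonal_seq _ eq12).
Qed.

Lemma orthonormal_seq_cons u (s : seq 'rV[R]_N) : orthonormal_seq (u :: s) =
  [&& dot u u == 1, all (fun v => dot u v == 0) s & orthonormal_seq s].
Proof.
by rewrite /orthonormal_seq /orthogonal_seq /= -andbA; congr andb; rewrite andbCA.
Qed.

Lemma orthonormal_seq_nth (s : seq 'rV[R]_N) : orthonormal_seq s ->
  {in gtn (size s) &, forall i j, dot (nth 0 s i) (nth 0 s j) = (i == j)%:R}.
Proof.
case/andP=> /all_nthP unit_s /(pairwiseP 0) orth_s i j lt_i lt_j.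
have [<-|] := eqVneq i j; first exact/eqP/unit_s.
by case: ltngtP => // [ij|ji] _; [|rewrite diag_formC]; apply/eqP/orth_s.
Qed.

End DiagonalForm.

Section Equalize.
Variables (R : realType) (N : nat) (a : 'I_N -> R).
Local Notation Q := (diag_form a).

(* The last clause says that t lies in the span of s; it is what makes w
   orthogonal to the family produced by the induction. *)
Lemma equalize_diag_form (s : seq 'rV[R]_N) :
  orthonormal_seq s -> orthogonal_seq Q s -> \sum_(u <- s) Q u u = (size s)%:R ->
  exists t, [/\ size t = size s, orthonormal_seq t, all (fun u => Q u u == 1) t &
    forall x, all (fun u => dot x u == 0) s -> all (fun u => dot x u == 0) t].
Proof.
have [k] := ubnP (size s); elim: k s => // k IH s.
have [size_s _ on_s _ sum_s|size_s] := ltnP (size s) 2.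
  exists s; split => //; case: s size_s sum_s {on_s} => [|u []] //= _.
  by rewrite big_seq1 => ->; rewrite eqxx.
move=> lt_k on_s og_s sum_s.
have [p [q [r [perm_s Qp Qq]]]] := exists_split_at_mean size_s sum_s.
rewrite (perm_size perm_s) in lt_k sum_s *.
rewrite (perm_big _ perm_s) /= !big_cons in sum_s.
move: on_s og_s; rewrite (perm_orthonormal_seq perm_s) (perm_orthogonal_seq _ perm_s).
rewrite !orthonormal_seq_cons /= /orthogonal_seq /= -/(orthogonal_seq Q r).
case/and5P=> /eqP pp /andP[/eqP pq p_r] /eqP qq q_r on_r.
case/and3P=> /andP[/eqP Qpq Qp_r] Qq_r og_r.
have [c [d [cd1 cdQ]]] := exists_sqr_weights Qp Qq.
pose w := c *: p + d *: q; pose w' := (- d) *: p + c *: q.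
have ww : dot w w = 1 by rewrite diag_form_rot // pp qq -[RHS]cd1; ring.
have w'w' : dot w' w' = 1 by rewrite diag_form_rot // pp qq -[RHS]cd1; ring.
have ww' : dot w w' = 0 by rewrite diag_form_rot // pp qq; ring.
have Qw : Q w w = 1 by rewrite diag_form_rot // -[RHS]cdQ; ring.
have Qw' : Q w' w' = Q p p + Q q q - 1.
  by rewrite diag_form_rot // -[in RHS]cdQ -[Q p p + _]mul1r -cd1; ring.
have [||||t [size_t on_t Qt orth_t]] := IH (w' :: r).
- by rewrite /= -ltnS.
- by rewrite orthonormal_seq_cons w'w' eqxx diag_formDl_all0.
- by rewrite /orthogonal_seq /= diag_formDl_all0.
- by rewrite big_cons Qw' /=; move: sum_s; rewrite -!natr1; lra.
exists (w :: t); split.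
- by rewrite /= size_t.
- rewrite orthonormal_seq_cons ww eqxx on_t andbT /=; apply: orth_t.
  by rewrite /= ww' eqxx diag_formDl_all0.
- by rewrite /= Qw eqxx Qt.
move=> x; rewrite (perm_all _ perm_s) /= => /and3P[/eqP xp /eqP xq x_r].
rewrite diag_formDr xp xq; apply/andP; split; first by apply/eqP; ring.
apply: orth_t; rewrite /= diag_formDr xp xq x_r andbT.
by apply/eqP; ring.
Qed.

End Equalize.

Section StandardBasis.
Variables (R : realType) (n : nat).
Implicit Types (a : 'I_n -> R) (i j : 'I_n).

Definition std_basis : seq 'rV[R]_n := [seq delta_mx 0 j | j <- enum 'I_n].

Lemma diag_form_std a i j :
  diag_form a (delta_mx 0 i : 'rV[R]_n) (delta_mx 0 j) = (i == j)%:R * a j.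
Proof. by rewrite diag_form_delta mxE eqxx /= eq_sym mulrC. Qed.

Lemma orthogonal_std_basis a : orthogonal_seq (diag_form a) std_basis.
Proof.
rewrite /orthogonal_seq pairwise_map; have := enum_uniq 'I_n; rewrite uniq_pairwise.
by apply: sub_pairwise => i j /= ij; rewrite diag_form_std eq_sym (negbTE ij) mul0r.
Qed.

Lemma orthonormal_std_basis : orthonormal_seq std_basis.
Proof.
rewrite /orthonormal_seq orthogonal_std_basis andbT.
by apply/allP => _ /mapP[j _ ->]; rewrite diag_form_std eqxx mulr1.
Qed.

Lemma sum_diag_form_std_basis a :
  \sum_(u <- std_basis) diag_form a u u = \sum_(j < n) a j.
Proof.
by rewrite big_map big_enum; apply: eq_bigr => j _; rewrite diag_form_std eqxx mul1r.
Qed.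

Lemma size_std_basis : size std_basis = n.
Proof. by rewrite size_map size_enum_ord. Qed.

End StandardBasis.

Lemma orthonormal_basisP (R : realType) (n : nat) (v : 'I_n -> 'rV[R]_n) :
  (forall i j, dotv (v i) (v j) = (i == j)%:R) -> orthonormal_basis v.
Proof.
move=> vv; split => //.
suff /mulmx1_unit[] : (\matrix_i v i) *m (\matrix_i v i)^T = 1%:M by [].
by apply/matrixP => i j; rewrite !mxE -vv; apply: eq_bigr => k _; rewrite !mxE.
Qed.

Theorem lemma4 (R : realType) (n : nat) (a : 'I_n -> R)
  (ha : forall j, 0 <= a j) (hsum : \sum_(j < n) a j = n%:R) :
  exists v : 'I_n -> 'rV[R]_n,
    orthonormal_basis v /\ forall j, ellipsoid a (v j).
Proof.
have [|t [size_t on_t Qt _]] := equalize_diag_form (orthonormal_std_basis R n)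
  (orthogonal_std_basis a).
  by rewrite sum_diag_form_std_basis size_std_basis.
rewrite size_std_basis in size_t.
have lt_t (j : 'I_n) : (j < size t)%N by rewrite size_t.
exists (fun j => nth 0 t j); split.
  apply: orthonormal_basisP => i j.
  by rewrite dotvE (orthonormal_seq_nth on_t) ?inE ?lt_t //.
by move=> j; rewrite /ellipsoid -diag_form_sqr; apply/eqP/(allP Qt)/mem_nth.
Qed.
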